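(* Let $M=(a_{ij})$ be a matrix game with entries in $[0,1]$ and value $v$, and let $\epsilon,c\ge0$. Let $M(t)$ be a corresponding repeated game with error $c\epsilon$ in which both players are $\epsilon$-Hannan consistent (with respect to the observed payoffs). Then almost surely \[v-(c+1)\epsilon\le\liminf_{t\to\infty}g(t)\le\limsup_{t\to\infty}g(t)\le v+(c+1)\epsilon,\] \[v-2(c+1)\epsilon\le\liminf_{t\to\infty}u(\hat\sigma_1(t),br)\le\limsup_{t\to\infty}u(br,\hat\sigma_2(t))\le v+2(c+1)\epsilon.\]
   Context: Repeated game with error $e$: at rounds $t=1,2,\dots$ player 1 chooses a row $i(t)$ and player 2 a column $j(t)$, and they observe a random payoff $a_{i(t)j(t)}(t)\in[0,1]$ whose distribution may depend on all previous action choices; it is required that almost surely there is $t_0$ with $|a_{ij}(t)-a_{ij}|<e$ for all $i,j$ and all $t\ge t_0$. Player 1 receives reward $a_{i(t)j(t)}(t)$ and player 2 the reward $1-a_{i(t)j(t)}(t)$. A player is $\epsilon$-Hannan consistent if its average external regret $r(t)=\frac1t(\max_k\sum_{s\le t}x_k(s)-\sum_{s\le t}x_{k(s)}(s))$ with respect to its observed rewards (where $x_k(s)$ is the reward it would have observed at round $s$ by playing $k$) satisfies $\limsup_t r(t)\le\epsilon$ a.s. Here $g(t)=\frac1t\sum_{s=1}^t a_{i(s)j(s)}(s)$; empirical frequencies $\hat\sigma_1(t)(i)=t_i/t$, $\hat\sigma_2(t)(j)=t_j/t$ with $t_i$ ($t_j$) the number of rounds $s\le t$ with $i(s)=i$ ($j(s)=j$).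 Utilities refer to the exact matrix: $u(\sigma_1,\sigma_2)=\sigma_1M\sigma_2$, $u(br,\sigma_2)=\max_{\sigma_1'}\sigma_1'M\sigma_2$, $u(\sigma_1,br)=\min_{\sigma_2'}\sigma_1M\sigma_2'$. *)

From HB Require Import structures.
From mathcomp Require Import all_boot all_order all_algebra.
From mathcomp Require Import all_classical all_reals all_analysis.
Set Implicit Arguments. Unset Strict Implicit. Unset Printing Implicit Defensive.
Import Order.TTheory GRing.Theory Num.Theory.
Local Open Scope classical_set_scope.
Local Open Scope ring_scope.

Section Game.
Context {R : realType}.

Definition mixed (k : nat) : set 'rV[R]_k :=
  [set s | (forall i, 0 <= s 0 i) /\ \sum_i s 0 i = 1].
Arguments mixed : clear implicits.

Definition util (m n : nat) (M : 'M[R]_(m, n)) (s1 : 'rV[R]_m) (s2 : 'rV[R]_n) : R :=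
  \sum_i \sum_j s1 0 i * M i j * s2 0 j.

Definition util_br1 m n (M : 'M[R]_(m, n)) (s2 : 'rV[R]_n) : R :=
  sup [set util M s1 s2 | s1 in mixed m].

Definition util_br2 m n (M : 'M[R]_(m, n)) (s1 : 'rV[R]_m) : R :=
  inf [set util M s1 s2 | s2 in mixed n].

Definition game_value m n (M : 'M[R]_(m, n)) : R :=
  sup [set util_br2 M s1 | s1 in mixed m].

(* Rounds are t = 1, 2, ...; the index 0 of the processes is unused. *)

Definition avg_payoff m n (a : nat -> 'I_m -> 'I_n -> R)
  (i : nat -> 'I_m) (j : nat -> 'I_n) (t : nat) : R :=
  t%:R^-1 * \sum_(1 <= s < t.+1) a s (i s) (j s).

Definition emp_freq k (i : nat -> 'I_k) (t : nat) : 'rV[R]_k :=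
  \row_l (t%:R^-1 * \sum_(1 <= s < t.+1) ((i s == l)%:R : R)).

Definition regret k (x : nat -> 'I_k.+1 -> R) (act : nat -> 'I_k.+1) (t : nat) : R :=
  t%:R^-1 *
  (\big[Num.max/ \sum_(1 <= s < t.+1) x s ord0]_(l < k.+1) \sum_(1 <= s < t.+1) x s l
   - \sum_(1 <= s < t.+1) x s (act s)).

End Game.

From HB Require Import structures.
From mathcomp Require Import all_boot all_order all_algebra.
From mathcomp Require Import all_classical all_reals all_analysis.
From mathcomp Require Import ring lra.
Import Order.TTheory GRing.Theory Num.Theory.
Local Open Scope classical_set_scope.
Local Open Scope ring_scope.

(* Fix a column l.  Player 2's regret bounds how much better l would have done
   than the realised play, so sum_s a_{i(s) l}(s) >= t (g(t) - r2(t)); from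
   round t0 on, a is within c eps of M, and the first t0 rounds only cost t0/t.
   Averaging over the columns of a mixed strategy gives
     u(sigma1^(t), br) >= g(t) - r2(t) - c eps - t0/t,
   and symmetrically u(br, sigma2^(t)) <= g(t) + r1(t) + c eps + t0/t.
   Since u(sigma1^(t), br) <= v <= u(br, sigma2^(t)) (no minimax theorem is
   needed), regrets with limsup at most eps trap g(t) within (c+1) eps of v in
   the limit, and the best-response utilities within 2 (c+1) eps. *)

Section MixedStrategies.
Context {R : realType}.

Lemma mixed_pure k (l : 'I_k) : mixed (\row_j (j == l)%:R : 'rV[R]_k).
Proof.
split=> [i|]; first by rewrite mxE ler0n.
rewrite (bigD1 l) //= big1 ?mxE ?eqxx ?addr0 // => i /negbTE il.
by rewrite mxE il.
Qed.

Lemma le_mixed_sum k (s : 'rV[R]_k) (f : 'I_k -> R) x :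
  mixed s -> (forall l, x <= f l) -> x <= \sum_l s 0 l * f l.
Proof.
move=> [s_ge0 s_sum1] xf; rewrite -[x]mul1r -s_sum1 mulr_suml.
by apply: ler_sum => l _; rewrite ler_wpM2l.
Qed.

Lemma mixed_sum_le k (s : 'rV[R]_k) (f : 'I_k -> R) x :
  mixed s -> (forall l, f l <= x) -> \sum_l s 0 l * f l <= x.
Proof.
move=> [s_ge0 s_sum1] fx; rewrite -[x]mul1r -s_sum1 mulr_suml.
by apply: ler_sum => l _; rewrite ler_wpM2l.
Qed.

End MixedStrategies.

Section BestResponses.
Context {R : realType} (m n : nat) (M : 'M[R]_(m.+1, n.+1)).
Hypothesis M01 : forall k l, 0 <= M k l <= 1.

Lemma util_ge0 {s1 s2} : mixed s1 -> mixed s2 -> 0 <= util M s1 s2.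
Proof.
move=> [s1_ge0 _] [s2_ge0 _]; apply: sumr_ge0 => k _; apply: sumr_ge0 => l _.
by rewrite !mulr_ge0 //; case/andP: (M01 k l).
Qed.

Lemma util_le1 {s1 s2} : mixed s1 -> mixed s2 -> util M s1 s2 <= 1.
Proof.
move=> ms1 ms2; rewrite /util.
rewrite (eq_bigr (fun k => s1 0 k * \sum_l s2 0 l * M k l)); last first.
  by move=> k _; rewrite mulr_sumr; apply: eq_bigr => l _; ring.
apply: mixed_sum_le => // k; apply: mixed_sum_le => // l.
by case/andP: (M01 k l).
Qed.

Lemma util_br2_le {s1 s2} : mixed s1 -> mixed s2 -> util_br2 M s1 <= util M s1 s2.
Proof.
move=> ms1 ms2; apply: ge_inf; last by exists s2.
by exists 0 => _ [s ms <-]; exact: util_ge0.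
Qed.

Lemma le_util_br2 s1 x :
  (forall s2, mixed s2 -> x <= util M s1 s2) -> x <= util_br2 M s1.
Proof.
move=> h; apply: lb_le_inf; first by exists (util M s1 (\row_j (j == ord0)%:R)),
  (\row_j (j == ord0)%:R); first exact: mixed_pure.
by move=> _ [s ms <-]; exact: h.
Qed.

Lemma util_le_br1 {s1 s2} : mixed s1 -> mixed s2 -> util M s1 s2 <= util_br1 M s2.
Proof.
move=> ms1 ms2; apply: ub_le_sup; last by exists s1.
by exists 1 => _ [s ms <-]; exact: util_le1.
Qed.

Lemma util_br1_le s2 x :
  (forall s1, mixed s1 -> util M s1 s2 <= x) -> util_br1 M s2 <= x.
Proof.
move=> h; apply: ge_sup; first by exists (util M (\row_j (j == ord0)%:R) s2),
  (\row_j (j == ord0)%:R); first exact: mixed_pure.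
by move=> _ [s ms <-]; exact: h.
Qed.

Lemma util_br2_le_value s1 : mixed s1 -> util_br2 M s1 <= game_value M.
Proof.
move=> ms1; apply: ub_le_sup; last by exists s1.
have e0 := @mixed_pure R _ (ord0 : 'I_n.+1).
exists 1 => _ [s ms <-]; exact: le_trans (util_br2_le ms e0) (util_le1 ms e0).
Qed.

Lemma value_le_util_br1 s2 : mixed s2 -> game_value M <= util_br1 M s2.
Proof.
move=> ms2; apply: ge_sup; first by exists (util_br2 M (\row_j (j == ord0)%:R)),
  (\row_j (j == ord0)%:R); first exact: mixed_pure.
by move=> _ [s ms <-]; exact: le_trans (util_br2_le ms ms2) (util_le_br1 ms ms2).
Qed.

End BestResponses.

Section EmpiricalFrequencies.
Context {R : realType}.

Lemma sum_delta_mul k (x : 'I_k) (F : 'I_k -> R) : \sum_y (x == y)%:R * F y = F x.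
Proof.
rewrite (bigD1 x) //= eqxx mul1r big1 ?addr0 // => y /negbTE.
by rewrite eq_sym => ->; rewrite mul0r.
Qed.

Lemma mixed_emp_freq k (i : nat -> 'I_k) t :
  (0 < t)%N -> mixed (emp_freq i t : 'rV[R]_k).
Proof.
move=> t_gt0; split=> [l|].
  by rewrite mxE mulr_ge0 ?invr_ge0 ?ler0n // sumr_ge0 // => s _; rewrite ler0n.
under eq_bigr do rewrite mxE.
rewrite -mulr_sumr exchange_big /=.
under eq_bigr => s _.
  rewrite (eq_bigr (fun l => (i s == l)%:R * 1)); last by move=> l _; rewrite mulr1.
  rewrite sum_delta_mul; over.
by rewrite sumr_const_nat subn1 /= mulVf // pnatr_eq0 -lt0n.
Qed.

Lemma util_emp_freql m n (M : 'M[R]_(m, n)) (i : nat -> 'I_m) t s2 :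
  util M (emp_freq i t) s2
  = t%:R^-1 * \sum_l s2 0 l * \sum_(1 <= s < t.+1) M (i s) l.
Proof.
rewrite /util exchange_big mulr_sumr; apply: eq_bigr => l _.
rewrite (eq_bigr (fun s => \sum_k (i s == k)%:R * M k l)); last first.
  by move=> s _; rewrite sum_delta_mul.
rewrite exchange_big !mulr_sumr; apply: eq_bigr => k _.
by rewrite mxE -mulr_suml; ring.
Qed.

Lemma util_emp_freqr m n (M : 'M[R]_(m, n)) (j : nat -> 'I_n) t s1 :
  util M s1 (emp_freq j t)
  = t%:R^-1 * \sum_k s1 0 k * \sum_(1 <= s < t.+1) M k (j s).
Proof.
rewrite /util mulr_sumr; apply: eq_bigr => k _.
rewrite (eq_bigr (fun s => \sum_l (j s == l)%:R * M k l)); last first.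
  by move=> s _; rewrite sum_delta_mul.
rewrite exchange_big !mulr_sumr; apply: eq_bigr => l _.
by rewrite mxE -mulr_suml; ring.
Qed.

End EmpiricalFrequencies.

Section RegretAndErrors.
Context {R : realType}.

Lemma sum_le_regret {k} (x : nat -> 'I_k.+1 -> R) act t l : (0 < t)%N ->
  \sum_(1 <= s < t.+1) x s l - \sum_(1 <= s < t.+1) x s (act s)
  <= t%:R * regret x act t.
Proof.
move=> t_gt0; rewrite /regret mulrA mulfV ?mul1r ?pnatr_eq0 -?lt0n // lerD2r.
exact: le_bigmax.
Qed.

Lemma sum_le_eventually_bounded (F : nat -> R) (t0 : nat) (e : R) :
  0 <= e -> (forall s, F s <= 1) -> (forall s, (t0 <= s)%N -> F s <= e) ->
  forall t, \sum_(1 <= s < t.+1) F s <= t0%:R + t%:R * e.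
Proof.
move=> e_ge0 F_le1 F_le_e.
suff sum_le t : \sum_(1 <= s < t.+1) F s <= (minn t t0)%:R + t%:R * e.
  by move=> t; apply: le_trans (sum_le t) _; rewrite lerD2r ler_nat geq_minr.
elim: t => [|t IHt]; first by rewrite big_geq // mul0r addr0.
rewrite big_nat_recr //= -natr1.
have [t_lt|t_ge] := ltnP t.+1 t0.
  rewrite (minn_idPl (ltnW (ltnW t_lt))) in IHt.
  by rewrite -natr1; have := F_le1 t.+1; lra.
have : (minn t t0)%:R <= t0%:R :> R by rewrite ler_nat geq_minr.
by have := F_le_e _ t_ge; lra.
Qed.

End RegretAndErrors.

Section ObservedPlay.
Context {R : realType} (m n : nat) (M : 'M[R]_(m.+1, n.+1))
  (a : nat -> 'I_m.+1 -> 'I_n.+1 -> R) (i : nat -> 'I_m.+1) (j : nat -> 'I_n.+1)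
  (ce : R) (t0 : nat).
Hypothesis M01 : forall k l, 0 <= M k l <= 1.
Hypothesis a01 : forall s k l, 0 <= a s k l <= 1.
Hypothesis ce_ge0 : 0 <= ce.
Hypothesis a_near_M : forall s, (t0 <= s)%N -> forall k l, `|a s k l - M k l| < ce.

Let regret1 := regret (fun s k => a s k (j s)) i.
Let regret2 := regret (fun s l => 1 - a s (i s) l) j.

Lemma mulr_avg_payoff t : (0 < t)%N ->
  t%:R * avg_payoff a i j t = \sum_(1 <= s < t.+1) a s (i s) (j s).
Proof. by move=> t_gt0; rewrite mulrA mulfV ?mul1r // pnatr_eq0 -lt0n. Qed.

Lemma le_sum_column t l : (0 < t)%N ->
  t%:R * (avg_payoff a i j t - regret2 t - ce) - t0%:R
  <= \sum_(1 <= s < t.+1) M (i s) l.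
Proof.
move=> t_gt0.
have reg := sum_le_regret (fun s l => 1 - a s (i s) l) j t l t_gt0.
have err : \sum_(1 <= s < t.+1) (a s (i s) l - M (i s) l) <= t0%:R + t%:R * ce.
  apply: sum_le_eventually_bounded => // s.
    by have := a01 s (i s) l; have := M01 (i s) l; lra.
  by move=> /a_near_M /(_ (i s) l); rewrite ltr_norml; lra.
move: reg err; rewrite !sumrB !mulrBr mulr_avg_payoff // /regret2; lra.
Qed.

Lemma sum_row_le t k : (0 < t)%N ->
  \sum_(1 <= s < t.+1) M k (j s)
  <= t%:R * (avg_payoff a i j t + regret1 t + ce) + t0%:R.
Proof.
move=> t_gt0.
have reg := sum_le_regret (fun s k => a s k (j s)) i t k t_gt0.
have err : \sum_(1 <= s < t.+1) (M k (j s) - a s k (j s)) <= t0%:R + t%:R * ce.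
  apply: sum_le_eventually_bounded => // s.
    by have := a01 s k (j s); have := M01 k (j s); lra.
  by move=> /a_near_M /(_ k (j s)); rewrite ltr_norml; lra.
move: reg err; rewrite !sumrB !mulrDr mulr_avg_payoff // /regret1; lra.
Qed.

Lemma le_util_br2_emp_freq t : (0 < t)%N ->
  avg_payoff a i j t - regret2 t - ce - t%:R^-1 * t0%:R
  <= util_br2 M (emp_freq i t).
Proof.
move=> t_gt0; apply: le_util_br2 => // s2 ms2; rewrite util_emp_freql.
have -> : avg_payoff a i j t - regret2 t - ce - t%:R^-1 * t0%:R
    = t%:R^-1 * (t%:R * (avg_payoff a i j t - regret2 t - ce) - t0%:R).
  by field; rewrite pnatr_eq0 -lt0n.
rewrite ler_wpM2l ?invr_ge0 //; apply: le_mixed_sum => // l.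
exact: le_sum_column.
Qed.

Lemma util_br1_emp_freq_le t : (0 < t)%N ->
  util_br1 M (emp_freq j t)
  <= avg_payoff a i j t + regret1 t + ce + t%:R^-1 * t0%:R.
Proof.
move=> t_gt0; apply: util_br1_le => // s1 ms1; rewrite util_emp_freqr.
have -> : avg_payoff a i j t + regret1 t + ce + t%:R^-1 * t0%:R
    = t%:R^-1 * (t%:R * (avg_payoff a i j t + regret1 t + ce) + t0%:R).
  by field; rewrite pnatr_eq0 -lt0n.
rewrite ler_wpM2l ?invr_ge0 //; apply: mixed_sum_le => // k.
exact: sum_row_le.
Qed.

End ObservedPlay.

Section Asymptotics.
Context {R : realType}.
Implicit Types (u : nat -> R) (x : R).

Lemma near_le_of_limn_esup_le {u x} :
  (limn_esup (fun t => (u t)%:E) <= x%:E)%E ->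
  forall e, 0 < e -> \forall t \near \oo, u t <= x + e.
Proof.
move=> u_le e e_gt0.
have : (limn_esup (fun t => (u t)%:E) < (x + e)%:E)%E.
  by apply: le_lt_trans u_le _; rewrite lte_fin ltrDl.
rewrite /limn_esup /limf_esup => /ereal_inf_lt[_ [V V_oo <-]] supV_lt.
apply: filterS V_oo => t Vt; rewrite -lee_fin; apply/ltW; apply: le_lt_trans supV_lt.
by apply: ereal_sup_ubound; exists t.
Qed.

Lemma limn_esup_le_of_near u x :
  (forall e, 0 < e -> \forall t \near \oo, u t <= x + e) ->
  (limn_esup (fun t => (u t)%:E) <= x%:E)%E.
Proof.
move=> u_le; apply/lee_addgt0Pr => e e_gt0.
apply: (@le_trans _ _ (ereal_sup ((fun t => (u t)%:E) @` [set t | u t <= x + e]))).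
  by apply: ereal_inf_lbound; exists [set t | u t <= x + e] => //; exact: u_le.
by apply: ge_ereal_sup => _ [t /= ut <-]; rewrite -EFinD lee_fin.
Qed.

Lemma limn_einf_ge_of_near u x :
  (forall e, 0 < e -> \forall t \near \oo, x - e <= u t) ->
  (x%:E <= limn_einf (fun t => (u t)%:E))%E.
Proof.
move=> u_ge; rewrite /limn_einf leeNr -EFinN.
apply: (@limn_esup_le_of_near (fun t => - u t)) => e /u_ge.
by apply: filterS => t; lra.
Qed.

Lemma near_invn_mul_le (k e : R) : 0 < e -> \forall t \near \oo, t%:R^-1 * k <= e.
Proof.
move=> e_gt0; near=> t.
have t_gt0 : 0 < t%:R :> R by rewrite ltr0n; near: t; exact: nbhs_infty_gt.
rewrite ler_pdivrMl // -ler_pdivrMr //.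
by near: t; exact: nbhs_infty_ger.
Unshelve. all: by end_near.
Qed.

End Asymptotics.

Lemma regret_sandwich_limits {R : realType} (g A B U1 U2 r : nat -> R) (v ce eps : R) :
  (limn_esup (fun t => (A t)%:E) <= eps%:E)%E ->
  (limn_esup (fun t => (B t)%:E) <= eps%:E)%E ->
  (forall e, 0 < e -> \forall t \near \oo, r t <= e) ->
  (\forall t \near \oo, [/\ g t - B t - ce - r t <= U2 t,
     U1 t <= g t + A t + ce + r t, U2 t <= v & v <= U1 t]) ->
  ([/\ (v - (ce + eps))%:E <= limn_einf (fun t => (g t)%:E),
      limn_einf (fun t => (g t)%:E) <= limn_esup (fun t => (g t)%:E)
    & limn_esup (fun t => (g t)%:E) <= (v + (ce + eps))%:E] /\
   [/\ (v - 2 * (ce + eps))%:E <= limn_einf (fun t => (U2 t)%:E),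
      limn_einf (fun t => (U2 t)%:E) <= limn_esup (fun t => (U1 t)%:E)
    & limn_esup (fun t => (U1 t)%:E) <= (v + 2 * (ce + eps))%:E])%E.
Proof.
move=> A_le B_le r_small sandwich.
have near_bounds e : 0 < e -> \forall t \near \oo,
    [/\ v - (ce + eps) - e <= g t, g t <= v + (ce + eps) + e,
        v - 2 * (ce + eps) - e <= U2 t & U1 t <= v + 2 * (ce + eps) + e].
  move=> e_gt0; have e4_gt0 : 0 < e / 4 by rewrite divr_gt0.
  move: (near_le_of_limn_esup_le A_le _ e4_gt0) (near_le_of_limn_esup_le B_le _ e4_gt0).
  move: (r_small _ e4_gt0); apply: filter_app3.
  by apply: filterS sandwich => t [] *; split; lra.
have U2_le_v : (limn_esup (fun t => (U2 t)%:E) <= v%:E)%E.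
  by apply: limn_esup_le_of_near => e e_gt0; apply: filterS sandwich => t []; lra.
have v_le_U1 : (v%:E <= limn_einf (fun t => (U1 t)%:E))%E.
  by apply: limn_einf_ge_of_near => e e_gt0; apply: filterS sandwich => t []; lra.
split; split; rewrite ?limn_einf_sup //.
- by apply: limn_einf_ge_of_near => e /near_bounds; apply: filterS => t []; lra.
- by apply: limn_esup_le_of_near => e /near_bounds; apply: filterS => t []; lra.
- by apply: limn_einf_ge_of_near => e /near_bounds; apply: filterS => t []; lra.
- apply: le_trans (limn_einf_sup _) (le_trans U2_le_v _).
  exact: le_trans v_le_U1 (limn_einf_sup _).
- by apply: limn_esup_le_of_near => e /near_bounds; apply: filterS => t []; lra.
Qed.

Theorem proposition1 (R : realType) (d : measure_display) (Omega : measurableType d)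
  (P : probability Omega R) (m n : nat) (M : 'M[R]_(m.+1, n.+1))
  (eps c : R)
  (a : nat -> Omega -> 'I_m.+1 -> 'I_n.+1 -> R)
  (i : nat -> Omega -> 'I_m.+1) (j : nat -> Omega -> 'I_n.+1) :
  (forall k l, 0 <= M k l <= 1) ->
  0 <= eps -> 0 <= c ->
  (forall t w k l, 0 <= a t w k l <= 1) ->
  (* repeated game with error c * eps *)
  {ae P, forall w, exists t0 : nat, forall t, (t0 <= t)%N ->
      forall k l, `|a t w k l - M k l| < c * eps} ->
  (* player 1 is eps-Hannan consistent w.r.t. observed rewards a_{k j(s)}(s) *)
  {ae P, forall w, limn_esup (fun t => (regret (fun s k => a s w k (j s w))
                                              (fun s => i s w) t)%:E) <= eps%:E}%E ->
  (* player 2 is eps-Hannan consistent w.r.t. observed rewards 1 - a_{i(s) l}(s) *)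
  {ae P, forall w, limn_esup (fun t => (regret (fun s l => 1 - a s w (i s w) l)
                                              (fun s => j s w) t)%:E) <= eps%:E}%E ->
  {ae P, forall w,
    let g := fun t => (avg_payoff (fun s => a s w) (fun s => i s w) (fun s => j s w) t)%:E in
    let v := game_value M in
    [/\ (v - (c + 1) * eps)%:E <= limn_einf g,
        limn_einf g <= limn_esup g
      & limn_esup g <= (v + (c + 1) * eps)%:E] /\
    [/\ (v - 2 * (c + 1) * eps)%:E
          <= limn_einf (fun t => (util_br2 M (emp_freq (fun s => i s w) t))%:E),
        limn_einf (fun t => (util_br2 M (emp_freq (fun s => i s w) t))%:E)
          <= limn_esup (fun t => (util_br1 M (emp_freq (fun s => j s w) t))%:E)
      & limn_esup (fun t => (util_br1 M (emp_freq (fun s => j s w) t))%:E)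
          <= (v + 2 * (c + 1) * eps)%:E]}%E.
Proof.
move=> M01 eps_ge0 c_ge0 a01 a_near_M regret1_le regret2_le.
have ce_ge0 : 0 <= c * eps by rewrite mulr_ge0.
apply: filterS3 a_near_M regret1_le regret2_le => w [t0 near_M] r1_le r2_le /=.
have -> : 2 * (c + 1) * eps = 2 * (c * eps + eps) by ring.
have -> : (c + 1) * eps = c * eps + eps by ring.
apply: regret_sandwich_limits r1_le r2_le (near_invn_mul_le t0%:R) _.
near=> t; have t_gt0 : (0 < t)%N by near: t; exact: nbhs_infty_gt.
split.
- exact: le_util_br2_emp_freq.
- exact: util_br1_emp_freq_le.
- exact/util_br2_le_value/mixed_emp_freq.
- exact/value_le_util_br1/mixed_emp_freq.
Unshelve. all: by end_near.
Qed.
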